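(* Let $m\geq 1$, $n\geq 3$, let $k\in\{1,\ldots,m\}$ and let $i,j\in V^k$. A walk of length $n-1$ from $i$ to $j$ exists in $D^m_n$ if and only if one of the following holds: $i=1$ and $j=(k-1)(n-1)+n$; or $i=(k-1)(n-1)+2$ and $j=1$; or $i=(k-1)(n-1)+\ell$ and $j=i-1$ for some $\ell\in\{3,\ldots,n\}$. Moreover, in each of these cases there is exactly one walk of length $n-1$ from $i$ to $j$ in $D^m_n$.
   Context: For integers $m\geq 1$, $n\geq 3$, the oriented Dutch windmill graph $D^m_n$ is the directed graph with vertex set $V=\{1,2,\ldots,m(n-1)+1\}$ whose directed edges $(a,b)$ are exactly: $(1,(k-1)(n-1)+2)$ for $k\in\{1,\ldots,m\}$; $((k-1)(n-1)+i,(k-1)(n-1)+i+1)$ for $k\in\{1,\ldots,m\}$ and $i\in\{2,\ldots,n-1\}$; and $((k-1)(n-1)+n,1)$ for $k\in\{1,\ldots,m\}$. For $k\in\{1,\ldots,m\}$, $V^k=\{1\}\cup\{(k-1)(n-1)+\ell:\ \ell=2,\ldots,n\}$ is the vertex set of the $k$-th directed cycle $\langle 1,(k-1)(n-1)+2,\ldots,(k-1)(n-1)+n,1\rangle$. A walk is a sequence of vertices $\langle v_1,\ldots,v_r\rangle$ in which each $(v_t,v_{t+1})$ is an edge; its length is $r-1$. *)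

From mathcomp Require Import all_boot.
Set Implicit Arguments. Unset Strict Implicit. Unset Printing Implicit Defensive.

(* Directed edge relation of the oriented Dutch windmill graph D^m_n on the
   vertex set {1, ..., m(n-1)+1}:
   (1, (k-1)(n-1)+2) for k in {1..m};
   ((k-1)(n-1)+i, (k-1)(n-1)+i+1) for k in {1..m}, i in {2..n-1};
   ((k-1)(n-1)+n, 1) for k in {1..m}. *)
Definition dw_edge (m n : nat) (a b : nat) : bool :=
  [|| has (fun k => (a == 1) && (b == (k - 1) * (n - 1) + 2)) (iota 1 m),
      has (fun k => has (fun i => (a == (k - 1) * (n - 1) + i)
                                  && (b == (k - 1) * (n - 1) + i + 1))
                        (iota 2 (n - 2))) (iota 1 m)
    | has (fun k => (a == (k - 1) * (n - 1) + n) && (b == 1)) (iota 1 m)].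

Definition in_Vk (n k v : nat) : bool :=
  (v == 1) || has (fun l => v == (k - 1) * (n - 1) + l) (iota 2 (n - 1)).

(* A walk <v_1, ..., v_r> of length r-1 from i to j is encoded by its head
   v_1 = i and the tail p = [v_2; ...; v_r]; its length is size p. *)
Definition is_walk (m n : nat) (L i j : nat) (p : seq nat) : Prop :=
  [/\ size p = L, path (dw_edge m n) i p & last i p = j].

(* Every vertex of D^m_n other than the hub 1 has a single out-neighbour, its
   successor on its cycle, while the hub has one out-neighbour on each cycle.
   So a walk of length n-1 is determined by its start and by the cycle it
   enters on leaving the hub, which happens at most once.  From the hub it
   ends at the last vertex of the cycle it enters; from position l of a cycle
   it climbs n-l steps to the top, returns to the hub and goes l-2 steps into
   some cycle, ending at the hub (l = 2) or at position l-1 of that cycle.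
   Asking the endpoint to lie in V^k fixes that cycle, hence the walk. *)

From mathcomp Require Import all_boot zify.
From Corelib Require Import Setoid.

Set Implicit Arguments.
Unset Strict Implicit.
Unset Printing Implicit Defensive.

Definition walk_cases (n k i j : nat) : Prop :=
  (i = 1 /\ j = (k - 1) * (n - 1) + n)
  \/ (i = (k - 1) * (n - 1) + 2 /\ j = 1)
  \/ (exists l, 3 <= l <= n /\ i = (k - 1) * (n - 1) + l /\ j = i - 1).

Lemma exists_unique_iff (T : Type) (P : T -> Prop) (C C' : Prop) (w : T) :
  (C <-> C') -> (forall x, P x <-> C' /\ x = w) ->
  ((exists x, P x) <-> C) /\ (C -> exists! x, P x).
Proof.
move=> CE PE; split; first split.
- by case=> x /PE[/CE].
- by move/CE=> C'w; exists w; apply/PE.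
- move/CE=> C'w; exists w; split=> [|x /PE[] //]; exact/PE.
Qed.

Section WalkCases.
Variable n : nat.
Local Notation vtx q l := (q * (n - 1) + l).

Lemma walk_cases_hub k j : walk_cases n k 1 j <-> j = vtx (k - 1) n.
Proof. by split=> [[[_ ->] | [[E _] | [l [l_range [E _]]]]] | ->]; [| nia | nia | left]. Qed.

Lemma walk_cases_first k j : walk_cases n k (vtx (k - 1) 2) j <-> j = 1.
Proof. by split=> [[[E _] | [[_ ->] | [l [l_range [E _]]]]] | ->]; [nia | | lia | right; left]. Qed.

Lemma walk_cases_inner k l j : 3 <= l <= n ->
  walk_cases n k (vtx (k - 1) l) j <-> j = vtx (k - 1) l - 1.
Proof.
move=> l_range.
by split=> [[[E _] | [[E _] | [l' [_ [_ ->]]]]] | ->]; [nia | lia | | right; right; exists l].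
Qed.

End WalkCases.

Section Windmill.
Variables m n : nat.
Hypothesis n_gt1 : 1 < n.

Local Notation e := (dw_edge m n).
Local Notation walk := (is_walk m n).
(* Position l (2 <= l <= n) of the cycle V^(q+1); cycles are indexed from 0. *)
Local Notation vtx q l := (q * (n - 1) + l).

Lemma vtx_inj q1 q2 l1 l2 : 2 <= l1 <= n -> 2 <= l2 <= n ->
  vtx q1 l1 = vtx q2 l2 -> q1 = q2 /\ l1 = l2.
Proof.
move=> l1_range l2_range E.
have E2 : q1 * (n - 1) + (l1 - 2) = q2 * (n - 1) + (l2 - 2) by lia.
have := congr1 (divn^~ (n - 1)) E2; have := congr1 (modn^~ (n - 1)) E2.
rewrite !modnMDl !divnMDl ?subn_gt0 // !modn_small ?divn_small; lia.
Qed.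

Lemma dw_edgeP a b : e a b <->
  [\/ a = 1 /\ exists2 q, q < m & b = vtx q 2,
      exists2 q, q < m & exists2 l, 2 <= l < n & a = vtx q l /\ b = (vtx q l).+1
    | exists2 q, q < m & a = vtx q n /\ b = 1].
Proof.
rewrite /dw_edge; split.
- case/or3P => [/hasP[k k_in /andP[/eqP-> /eqP->]]
              | /hasP[k k_in /hasP[l l_in /andP[/eqP-> /eqP->]]]
              | /hasP[k k_in /andP[/eqP-> /eqP->]]];
    move: k_in; rewrite mem_iota => k_range.
  + by apply: Or31; split => //; exists k.-1; [lia | rewrite subn1].
  + move: l_in; rewrite mem_iota => l_range.
    by apply: Or32; exists k.-1; [lia | exists l; [lia | rewrite subn1 addn1]].
  + by apply: Or33; exists k.-1; [lia | rewrite subn1].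
- case=> [[-> [q q_lt ->]] | [q q_lt [l l_range [-> ->]]] | [q q_lt [-> ->]]];
    apply/or3P; [apply: Or31 | apply: Or32 | apply: Or33];
    apply/hasP; exists q.+1; rewrite ?mem_iota ?subn1 ?eqxx //=; try lia.
  apply/hasP; exists l; first by rewrite mem_iota; lia.
  by rewrite addn1 !eqxx.
Qed.

Lemma edge_hub b : e 1 b <-> exists2 q, q < m & b = vtx q 2.
Proof.
split.
  case/dw_edgeP=> [[_ ?] | [q _ [l l_range [E _]]] | [q _ [E _]]] //; nia.
by case=> q q_lt ->; apply/dw_edgeP; apply: Or31; split => //; exists q.
Qed.

Lemma edge_inner q l b : q < m -> 2 <= l < n -> e (vtx q l) b = (b == (vtx q l).+1).
Proof.
move=> q_lt l_range; apply/idP/eqP => [|->]; last first.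
  by apply/dw_edgeP; apply: Or32; exists q => //; exists l.
have l_range' : 2 <= l <= n by lia.
case/dw_edgeP => [[E _] | [q' _ [l' l'_range [E ->]]] | [q' _ [E _]]]; first nia.
- have l'_range' : 2 <= l' <= n by lia.
  by have [-> ->] := vtx_inj l_range' l'_range' E.
- have n_range : 2 <= n <= n by lia.
  by have [_ l_eq] := vtx_inj l_range' n_range E; lia.
Qed.

Lemma edge_top q b : q < m -> e (vtx q n) b = (b == 1).
Proof.
move=> q_lt; apply/idP/eqP => [|->]; last by apply/dw_edgeP; apply: Or33; exists q.
case/dw_edgeP => [[E _] | [q' _ [l' l'_range [E _]]] | [q' _ [_ ->]]] //; first nia.
have n_range : 2 <= n <= n by lia.
have l'_range' : 2 <= l' <= n by lia.
by have [_ l_eq] := vtx_inj n_range l'_range' E; lia.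
Qed.

Lemma is_walk0 i j p : walk 0 i j p <-> p = [::] /\ j = i.
Proof. by split=> [[/size0nil -> _ <-] | [-> ->]]. Qed.

Lemma is_walk_cons L i j b p : walk L.+1 i j (b :: p) <-> e i b /\ walk L b j p.
Proof.
rewrite /is_walk /=.
by split=> [[[->] /andP[-> ->] ->] | [-> [-> -> ->]]].
Qed.

Lemma is_walk_catP L1 L2 i j p : walk (L1 + L2) i j p <->
  exists x p1 p2, [/\ p = p1 ++ p2, walk L1 i x p1 & walk L2 x j p2].
Proof.
split=> [[size_p path_p last_p] | [x [p1 [p2 [-> [size1 path1 last1] [size2 path2 last2]]]]]].
- exists (last i (take L1 p)), (take L1 p), (drop L1 p).
  move: path_p last_p; rewrite -{1 2}(cat_take_drop L1 p) cat_path last_cat.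
  case/andP => path1 path2 last2.
  split; first by rewrite cat_take_drop.
    by split; rewrite // size_takel // size_p leq_addr.
  by split; rewrite // size_drop size_p addKn.
- by split; rewrite ?size_cat ?cat_path ?last_cat ?size1 ?size2 ?path1 ?last1 ?path2.
Qed.

Lemma arc_walkP q l t j p : q < m -> 2 <= l -> l + t <= n ->
  walk t (vtx q l) j p <-> p = iota (vtx q l).+1 t /\ j = vtx q (l + t).
Proof.
move=> q_lt; elim: t l p => [|t IH] l p l_ge2 lt_le_n.
  by rewrite is_walk0 addn0.
case: p => [|b p]; first by split=> [[]|[]].
have walkE : walk t (vtx q l.+1) j p <->
             p = iota (vtx q l.+1).+1 t /\ j = vtx q (l.+1 + t).
  by apply: IH; lia.
rewrite is_walk_cons edge_inner //; last lia.
rewrite -[(vtx q l).+1]addnS -[l + t.+1]addSnnS.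
by split=> [[/eqP-> /walkE[-> ->]] | [[-> p_eq] j_eq]] //; split; last exact/walkE.
Qed.

Lemma hub_walkP t j p : 0 < t < n ->
  walk t 1 j p <-> exists2 q, q < m & p = iota (vtx q 2) t /\ j = vtx q t.+1.
Proof.
case: t => // t t_lt_n; case: p => [|b p]; first by split=> [[]|[q _ []]].
rewrite is_walk_cons; split=> [[/edge_hub[q q_lt ->]] | [q q_lt [[-> p_eq] j_eq]]].
- by rewrite arc_walkP // => -[-> ->]; exists q.
- split; first by apply/edge_hub; exists q.
  by rewrite arc_walkP //; lia.
Qed.

Lemma blade_walkP q l j p : q < m -> 2 <= l <= n ->
  walk (n - 1) (vtx q l) j p <->
  exists2 r, p = iota (vtx q l).+1 (n - l) ++ 1 :: r & walk (l - 2) 1 j r.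
Proof.
move=> q_lt /andP[l_ge2 l_le_n].
have {1}-> : n - 1 = (n - l) + (l - 2).+1 by lia.
have arcE x p1 :
  walk (n - l) (vtx q l) x p1 <-> p1 = iota (vtx q l).+1 (n - l) /\ x = vtx q n.
  by rewrite arc_walkP ?subnKC.
rewrite is_walk_catP; split=> [[x [p1 [p2 [-> walk1 walk2]]]] | [r -> walk_r]].
- move: walk1 walk2; rewrite arcE => -[-> ->].
  case: p2 => [[]//|b r]; rewrite is_walk_cons edge_top // => -[/eqP-> walk_r].
  by exists r.
- exists (vtx q n), (iota (vtx q l).+1 (n - l)), (1 :: r).
  split=> //; first by rewrite arcE.
  by rewrite is_walk_cons edge_top.
Qed.

Lemma in_VkP k v : in_Vk n k v -> v = 1 \/ exists2 l, 2 <= l <= n & v = vtx (k - 1) l.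
Proof.
case/orP => [/eqP-> | /hasP[l l_in /eqP->]]; [by left | right].
by exists l; rewrite // mem_iota in l_in; lia.
Qed.

Lemma in_Vk_vtx k q l : 2 <= l <= n -> in_Vk n k (vtx q l) -> q = k - 1.
Proof.
move=> l_range /in_VkP[E | [l' l'_range E]]; first nia.
by have [] := vtx_inj l_range l'_range E.
Qed.

Lemma walks_from_hub k j : 0 < k <= m -> in_Vk n k j -> forall p,
  walk (n - 1) 1 j p <-> j = vtx (k - 1) n /\ p = iota (vtx (k - 1) 2) (n - 1).
Proof.
move=> k_range j_in p; rewrite hub_walkP; last lia.
have -> : (n - 1).+1 = n by lia.
split=> [[q _ [-> j_eq]] | [-> ->]]; last by exists (k - 1); first lia.
have n_range : 2 <= n <= n by lia.
by move: j_in; rewrite j_eq => /(in_Vk_vtx n_range) ->.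
Qed.

Lemma walks_from_first q j : q < m -> forall p,
  walk (n - 1) (vtx q 2) j p <-> j = 1 /\ p = iota (vtx q 2).+1 (n - 2) ++ [:: 1].
Proof.
move=> q_lt p; rewrite blade_walkP //.
split=> [[r -> /is_walk0[-> ->]] | [-> ->]] //.
by exists [::]; rewrite ?is_walk0.
Qed.

Lemma walks_from_inner k l j : 0 < k <= m -> 3 <= l <= n -> in_Vk n k j -> forall p,
  walk (n - 1) (vtx (k - 1) l) j p <->
  j = vtx (k - 1) l - 1
  /\ p = iota (vtx (k - 1) l).+1 (n - l) ++ 1 :: iota (vtx (k - 1) 2) (l - 2).
Proof.
move=> k_range l_range j_in p; rewrite blade_walkP; try lia.
have hubE r : walk (l - 2) 1 j r <->
              exists2 q, q < m & r = iota (vtx q 2) (l - 2) /\ j = vtx q (l - 1).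
  by rewrite hub_walkP; [have -> : (l - 2).+1 = l - 1 by lia | lia].
split=> [[r ->] | [j_eq ->]].
- rewrite hubE => -[q _ [-> j_eq]].
  have l1_range : 2 <= l - 1 <= n by lia.
  by move: j_in; rewrite j_eq => /(in_Vk_vtx l1_range) ->; split=> //; nia.
- exists (iota (vtx (k - 1) 2) (l - 2)) => //.
  by rewrite hubE; exists (k - 1); [lia | split=> //; nia].
Qed.

End Windmill.

Theorem lemma2p1 (m n k i j : nat) :
  1 <= m -> 3 <= n -> 1 <= k <= m ->
  in_Vk n k i -> in_Vk n k j ->
  let cases :=
    (i = 1 /\ j = (k - 1) * (n - 1) + n)
    \/ (i = (k - 1) * (n - 1) + 2 /\ j = 1)
    \/ (exists l, 3 <= l <= n /\ i = (k - 1) * (n - 1) + l /\ j = i - 1) in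
  ((exists p, is_walk m n (n - 1) i j p) <-> cases)
  /\ (cases -> exists! p, is_walk m n (n - 1) i j p).
Proof.
move=> _ n_ge3 k_range i_in j_in cases; rewrite {}/cases.
have n_gt1 : 1 < n by lia.
have q_lt_m : k - 1 < m by lia.
case: (in_VkP n_gt1 i_in) => [-> | [l /andP[l_ge2 l_le_n] ->]].
  by apply: exists_unique_iff; [exact: walk_cases_hub | exact: walks_from_hub].
have [<- | l_ge3] := eqVneq 2 l.
  by apply: exists_unique_iff; [exact: walk_cases_first | exact: walks_from_first].
have l_range : 3 <= l <= n by lia.
by apply: exists_unique_iff; [exact: walk_cases_inner | exact: walks_from_inner].
Qed.
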